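(* Let $m$ be a positive integer and $x>1$ an integer. Let $j_m(x)\in\{0,\dots,x-1\}$ be the column of row $x$ of $T_m$ containing the value $1$. Then $J_{m+1}(x)$ is the element of $\{1,2,\dots,x\}$ congruent to $m-j_m(x)$ modulo $x$. Equivalently, in the Josephus game played on row $x$ of $T_m$, the entry $1$ is the last one remaining.
   Context: The triangle $T_m$ is an array whose row $x$ ($x=1,2,\dots$) has $x$ entries, in columns $0,\dots,x-1$. Row $1$ is the single entry $1$. For $x>1$, row $x$ is obtained from row $x-1$ by rotating it cyclically left by $m$ positions (the entry in column $c$ of row $x-1$ moves to column $(c-m)\bmod(x-1)\in\{0,\dots,x-2\}$ of row $x$), then appending in column $x-1$ a new entry equal to $1$ plus the entry in column $0$ of row $x-1$. Each row of $T_m$ contains exactly one entry equal to $1$. Josephus problem: place the integers $1,\dots,x$ clockwise in a circle; starting the count at $1$, repeatedly count $n$ consecutive remaining numbers clockwise and eliminate the $n$-th one counted, resuming the count at the next remaining number, until one number remains; $J_n(x)$ is that number. Josephus game on row $x$ of $T_m$: start at the entry in column $(m-1)\bmod x$, counting it as $1$; moving cyclically to the left (from column $0$ wrap to column $x-1$) over entries not yet crossed out, count $1,2,\dots,m+1$ and cross out the entry counted $m+1$; the next count starts (as $1$) at the next not-crossed-out entry to its left. Repeat until one entry remains. *)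

From mathcomp Require Import all_boot all_order all_algebra.
Set Implicit Arguments. Unset Strict Implicit. Unset Printing Implicit Defensive.

(* rowT0 m n = row (n+1) of the triangle T_m, as a list indexed by columns 0..n.
   Rotating a row r left by m positions is [rot (m %% size r) r]: the entry in
   column c moves to column (c - m) mod (size r). *)
Fixpoint rowT0 (m n : nat) : seq nat :=
  match n with
  | 0 => [:: 1]
  | n'.+1 => let r := rowT0 m n' in rcons (rot (m %% size r) r) (head 0 r).+1
  end.

Definition Trow (m x : nat) : seq nat := rowT0 m x.-1.

Definition jcol (m x : nat) : nat := index 1 (Trow m x).

(* The list [s] lists the
   remaining items in counting order, starting with the item counted as 1.
   The n-th counted item (index (n-1) mod size s) is removed and the new list
   starts at the next remaining item. *)
Definition elim_step (n : nat) (s : seq nat) : seq nat :=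
  let k := (n.-1) %% size s in drop k.+1 s ++ take k s.

Fixpoint elim_game (n f : nat) (s : seq nat) : seq nat :=
  match f with
  | 0 => s
  | f'.+1 => if size s <= 1 then s else elim_game n f' (elim_step n s)
  end.

Definition J (n x : nat) : nat := head 0 (elim_game n x (iota 1 x)).

(* The Josephus game on row x of T_m: entries listed in leftward cyclic order
   starting from column (m-1) mod x; count to m+1 and cross out. Returns the
   value of the last remaining entry. *)
Definition row_game_last (m x : nat) : nat :=
  head 0 (elim_game m.+1 x (rot (x.-1 - (m.-1 %% x)) (rev (Trow m x)))).

From mathcomp Require Import all_boot all_order all_algebra.
From mathcomp Require Import zify.

Set Implicit Arguments.
Unset Strict Implicit.
Unset Printing Implicit Defensive.

(* When the game is played on row x+1 of T_m, counting m+1 from column m-1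
   first crosses out column x, the entry appended last; the remaining entries,
   read leftward from the next one, are row x of T_m read exactly as the game
   on row x reads it.  By induction every game ends on the single 1 of row 1.
   Viewed as a Josephus game with step m+1 on x items, the survivor is at
   position J_{m+1}(x) - 1 of the list being played, and locating that entry
   (the unique 1) in row x gives J_{m+1}(x) = m - j_m(x) mod x. *)

Section Rotations.
Variable T : Type.
Implicit Types s : seq T.

Lemma nth_rot (x0 : T) s r i : r < size s -> i < size s ->
  nth x0 (rot r s) i = nth x0 s ((r + i) %% size s).
Proof.
move=> hr hi; rewrite /rot nth_cat size_drop; case: ltnP => h.
  by rewrite nth_drop modn_small //; lia.
rewrite nth_take; last lia.
have -> : r + i = 1 * size s + (i - (size s - r)) by lia.
by rewrite modnMDl modn_small //; lia.
Qed.

Lemma count_rot (a : pred T) n s : count a (rot n s) = count a s.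
Proof. by rewrite /rot count_cat addnC -count_cat cat_take_drop. Qed.

Lemma rot_eq_mod s i j : i <= size s -> j <= size s ->
  i = j %[mod size s] -> rot i s = rot j s.
Proof.
have edge a b : a < b <= size s -> a = b %[mod size s] -> rot a s = rot b s.
  case/andP=> lt_ab; rewrite leq_eqVlt => /predU1P[eb|lt_bs] e; last first.
    by move: e; rewrite !modn_small //; [lia | exact: ltn_trans lt_bs].
  move: e; rewrite eb modnn modn_small => [->|]; last lia.
  by rewrite rot0 rot_size.
move=> hi hj e; case: (ltngtP i j) => [lt_ij|lt_ji|-> //].
  by apply: edge => //; rewrite lt_ij.
by symmetry; apply: edge; rewrite ?lt_ji.
Qed.

Lemma rotr_eq_mod s i j : i <= size s -> j <= size s ->
  i = j %[mod size s] -> rotr i s = rotr j s.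
Proof.
move=> hi hj e; apply: (@rot_inj i).
by rewrite rotrK (@rot_eq_mod _ i j) ?size_rotr ?rotrK.
Qed.

End Rotations.

Lemma index_count1 (T : eqType) (x0 x : T) s i :
  count_mem x s = 1 -> i < size s -> nth x0 s i = x -> index x s = i.
Proof.
move=> cnt hi e; rewrite -(cat_take_drop i s) (drop_nth x0 hi) e in cnt *.
have /count_memPn x_take : count_mem x (take i s) = 0.
  by move: cnt; rewrite count_cat /= eqxx; lia.
by rewrite index_cat (negPf x_take) size_take hi /= eqxx addn0.
Qed.

Lemma modn_predS m d : 0 < m -> (m.-1 %% d).+1 = m %[mod d].
Proof. by case: m => // m _; rewrite -[(_ %% d).+1]addn1 modnDml addn1. Qed.

(* Josephus recurrence: 0-based position of the survivor among k.+1 items. *)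
Fixpoint survivor (n k : nat) : nat :=
  if k is k'.+1 then (n + survivor n k') %% k.+1 else 0.

Lemma survivor_lt n k : survivor n k < k.+1.
Proof. by case: k => //= k; rewrite ltn_pmod. Qed.

Lemma elim_stepE n s : 0 < size s ->
  elim_step n s = behead (rot (n.-1 %% size s) s).
Proof.
by move=> s_gt0; rewrite /elim_step /rot (drop_nth 0 (ltn_pmod _ s_gt0)).
Qed.

Lemma nth_elim_step n s i : 0 < n -> i < (size s).-1 ->
  nth 0 (elim_step n s) i = nth 0 s ((n + i) %% size s).
Proof.
move=> n_gt0 hi; have s_gt0 : 0 < size s by lia.
rewrite elim_stepE // nth_behead nth_rot ?ltn_pmod //; last lia.
by rewrite modnDml; congr (nth _ _ (_ %% _)); lia.
Qed.

Lemma elim_game_survivor n k s f : 0 < n -> size s = k.+1 -> k <= f ->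
  elim_game n f s = [:: nth 0 s (survivor n k)].
Proof.
move=> n_gt0; elim: k s f => [|k IH] s [|f] hs hf //=.
- by case: s hs => [|a []].
- by case: s hs => [|a []].
rewrite hs IH ?nth_elim_step ?hs ?survivor_lt //.
by rewrite elim_stepE hs // size_behead size_rot hs.
Qed.

Lemma J_survivor n x : 0 < n -> 0 < x -> J n x = (survivor n x.-1).+1.
Proof.
move=> n_gt0; case: x => // x _.
by rewrite /J (@elim_game_survivor n x) ?size_iota // nth_iota ?survivor_lt.
Qed.

Lemma size_rowT0 m k : size (rowT0 m k) = k.+1.
Proof. by elim: k => //= k IH; rewrite size_rcons size_rot IH. Qed.

Lemma rowT0_neq0 m k : 0 \notin rowT0 m k.
Proof.
elim: k => //= k IH; rewrite mem_rcons inE mem_rot negb_or IH andbT.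
by case: (rowT0 m k).
Qed.

Lemma count_rowT0_one m k : count_mem 1 (rowT0 m k) = 1.
Proof.
elim: k => //= k IH; rewrite -cats1 count_cat count_rot IH /= addn0.
case: (rowT0 m k) (rowT0_neq0 m k) (size_rowT0 m k) => // a r.
by rewrite in_cons negb_or eqSS eq_sym => /andP[/negPf ->].
Qed.

Lemma size_Trow m x : 0 < x -> size (Trow m x) = x.
Proof. by case: x => // x; rewrite /Trow size_rowT0. Qed.

(* The list played in [row_game_last], written with [rotr] so that the
   rotation composes with the one in [rowT0]. *)
Definition game_row (m x : nat) : seq nat := rotr (m.-1 %% x).+1 (rev (Trow m x)).

Lemma size_game_row m x : 0 < x -> size (game_row m x) = x.
Proof. by move=> x_gt0; rewrite size_rotr size_rev size_Trow. Qed.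

Lemma row_game_lastE m x : 0 < x ->
  row_game_last m x = head 0 (elim_game m.+1 x (game_row m x)).
Proof.
move=> x_gt0; rewrite /row_game_last /game_row /rotr size_rev size_Trow //.
by congr (head 0 (elim_game _ _ (rot _ _))); have := ltn_pmod m.-1 x_gt0; lia.
Qed.

Lemma elim_step_game_row m k : 0 < m ->
  elim_step m.+1 (game_row m k.+2) = game_row m k.+1.
Proof.
move=> m_gt0; have size_k2 := size_game_row m (ltn0Sn k.+1).
(* The entry crossed out is the head of [rev (Trow m k.+2)], in column k.+1. *)
rewrite elim_stepE size_k2 // /= (@rot_eq_mod _ _ _ (m.-1 %% k.+2).+1) ?size_k2;
  [|exact: ltnW (ltn_pmod _ _) | exact: ltn_pmod | by rewrite modn_mod modn_predS].
rewrite /game_row rotrK /Trow /= rev_rcons /= rev_rot size_rowT0.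
apply: rotr_eq_mod; rewrite size_rev size_rowT0.
- exact: ltnW (ltn_pmod _ _).
- exact: ltn_pmod.
- by rewrite modn_mod modn_predS.
Qed.

Lemma elim_game_row m x f : 0 < m -> 0 < x -> x.-1 <= f ->
  elim_game m.+1 f (game_row m x) = [:: 1].
Proof.
move=> m_gt0; elim: x f => [//|[|x] IH] f _ hf.
  by rewrite /game_row modn1; case: f hf.
case: f hf => [//|f] hf.
by rewrite /= size_game_row // elim_step_game_row // IH.
Qed.

Lemma row_game_last_one m x : 0 < m -> 0 < x -> row_game_last m x = 1.
Proof.
by move=> m_gt0 x_gt0; rewrite row_game_lastE // elim_game_row // leq_pred.
Qed.

Lemma nth_game_row_survivor m x : 0 < m -> 0 < x ->
  nth 0 (game_row m x) (survivor m.+1 x.-1) = 1.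
Proof.
move=> m_gt0 x_gt0; have := elim_game_row m_gt0 x_gt0 (leqnn x.-1).
by rewrite (@elim_game_survivor _ x.-1) ?size_game_row ?prednK // => -[].
Qed.

Lemma survivor_add_jcol m x : 0 < m -> 0 < x ->
  (survivor m.+1 x.-1).+1 + jcol m x = m %[mod x].
Proof.
move=> m_gt0 x_gt0; have e := nth_game_row_survivor m_gt0 x_gt0.
have q_lt : survivor m.+1 x.-1 < x by rewrite -{2}(prednK x_gt0) survivor_lt.
have c_lt : m.-1 %% x < x by rewrite ltn_pmod.
set q := survivor m.+1 x.-1 in e q_lt *; set c := m.-1 %% x in e c_lt *.
rewrite /game_row /rotr size_rev size_Trow // nth_rot ?size_rev ?size_Trow //
  ?nth_rev ?size_Trow ?ltn_pmod // in e; last lia.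
set r := (x - c.+1 + q) %% x in e.
have -> : jcol m x = x - r.+1.
  by apply: (index_count1 (count_rowT0_one m x.-1) _ e); rewrite size_Trow //; lia.
have -> : q.+1 + (x - r.+1) = (x - c.+1 + q) %/ x * x + c.+1.
  have := divn_eq (x - c.+1 + q) x; have := ltn_pmod (x - c.+1 + q) x_gt0.
  rewrite -/r; move: ((x - c.+1 + q) %/ x * x) => P; lia.
by rewrite modnMDl modn_predS.
Qed.

Lemma modz_subn a b c d : a + c = b %[mod d] ->
  (a%:Z = b%:Z - c%:Z %[mod d%:Z])%Z.
Proof.
move=> e; have -> : (a%:Z = (a + c)%:Z - c%:Z)%R by rewrite PoszD GRing.addrK.
by rewrite -modzDml modz_nat e -modz_nat modzDml.
Qed.

Theorem mainTheorem19 (m x : nat) (hm : 0 < m) (hx : 1 < x) :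
  [/\ 1 <= J m.+1 x <= x,
      ((J m.+1 x)%:Z = m%:Z - (jcol m x)%:Z %[mod x%:Z])%Z
    & row_game_last m x = 1].
Proof.
have x_gt0 : 0 < x by exact: ltnW.
have hJ := J_survivor (ltn0Sn m) x_gt0.
split; last exact: row_game_last_one.
- by rewrite hJ /= -{2}(prednK x_gt0) survivor_lt.
- by rewrite hJ; apply: modz_subn; exact: survivor_add_jcol.
Qed.
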